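(* Let $X$ be a countably infinite set, $W\subseteq\mathbb R^X$ containing the worlds below, and $\succeq$ a preorder on $W$ satisfying Strong Pareto and Permutation Invariance. Let $A,B\subseteq X$ be infinite and disjoint, and $k,l\in\mathbb R$ with $k\neq l$. Define $w(x)=k$ for $x\in A$, $w(x)=l$ otherwise, and $v(x)=k$ for $x\in B$, $v(x)=l$ otherwise. Then $w$ and $v$ are incomparable: neither $w\succeq v$ nor $v\succeq w$.
   Context: For a preorder $\succeq$, $w\succ v$ means $w\succeq v$ and not $v\succeq w$. For a permutation $\pi$ of $X$, $\pi(w)(x)=w(\pi(x))$. Strong Pareto: for all $w,v\in W$, if $w(x)\ge v(x)$ for all $x$ and $w(x)>v(x)$ for some $x$, then $w\succ v$. Permutation Invariance: for all $w,v\in W$ and every permutation $\pi$ of $X$, $w\succeq v$ iff $\pi(w)\succeq\pi(v)$. (Here $W=\{k,l\}^X$ may be taken, so that $W$ is closed under permutations.) *)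

From HB Require Import structures.
From mathcomp Require Import all_boot all_order all_algebra.
From mathcomp Require Import boolp classical_sets cardinality reals.
Export boolp classical_sets cardinality reals.
Set Implicit Arguments. Unset Strict Implicit. Unset Printing Implicit Defensive.
Import Order.TTheory GRing.Theory Num.Theory.
Local Open Scope classical_set_scope.
Local Open Scope ring_scope.

Section Worlds.
Variables (R : realType) (X : Type).

Definition permute (pi : X -> X) (w : X -> R) : X -> R := fun x => w (pi x).

Definition preorder_on (W : set (X -> R)) (ge : (X -> R) -> (X -> R) -> Prop) :=
  (forall w, W w -> ge w w) /\
  (forall a b c, W a -> W b -> W c -> ge a b -> ge b c -> ge a c).

Definition strictly (ge : (X -> R) -> (X -> R) -> Prop) w v := ge w v /\ ~ ge v w.

Definition strong_pareto (W : set (X -> R)) ge :=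
  forall w v, W w -> W v ->
    (forall x, v x <= w x) -> (exists x, v x < w x) -> strictly ge w v.

Definition permutation_invariance (W : set (X -> R)) ge :=
  forall w v, W w -> W v -> forall pi : X -> X, bijective pi ->
    (ge w v <-> ge (permute pi w) (permute pi v)).

Definition perm_closed (W : set (X -> R)) :=
  forall w (pi : X -> X), W w -> bijective pi -> W (permute pi w).

Definition world_on (A : set X) (k l : R) : X -> R :=
  fun x => if `[< A x >] then k else l.

End Worlds.

From mathcomp Require Import all_boot all_order all_algebra.
From mathcomp Require Import boolp classical_sets functions cardinality reals.
Import Order.TTheory GRing.Theory Num.Theory.
Local Open Scope classical_set_scope.
Local Open Scope ring_scope.
Local Open Scope card_scope.
Set Implicit Arguments. Unset Strict Implicit.

(* Enumerating [A] and [B] by [nat], one finds a permutation [tau] of [X]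
   exchanging [A] and [B], and a Hilbert-hotel permutation [sig] that moves one
   point of [A] into [B] and maps the rest of [A] into [A] and [B] into [B].
   Permutation Invariance under [tau] turns [w >= v] into [v >= w], so [w] and
   [v] would be indifferent, and so would [sig w] and [sig v]. But by Strong
   Pareto [sig w] lies strictly on one side of [w] and [sig v] strictly on the
   other side of [v], which contradicts transitivity. *)

Lemma countably_infinite_enum (X : Type) (A : set X) :
  countable A -> infinite_set A ->
  exists f : nat -> X, injective f /\ range f = A.
Proof.
move=> cA iA; have /card_esym/card_eqP[F] := eq_card_nat cA iA.
pose f n : X := \val (F (SigSub (mem_set (I : [set: nat] n)))).
exists f; split.
  move=> m n /val_inj/(@inj _ _ _ F) eqF.
  by have [] := eqF (in_setT _) (in_setT _).
apply/seteqP; split=> [_ [n _ <-]|x Ax]; first exact: set_mem (valP _).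
have [[n nT] _ /= Fn] := (@surj _ _ _ _ F) (SigSub (mem_set Ax)) I.
exists n => //; rewrite /f.
have -> : SigSub (mem_set (I : [set: nat] n)) = exist _ n nT :> [set: nat].
  exact: val_inj.
by rewrite Fn.
Qed.

Section LiftPerm.
Variables (I : choiceType) (X : Type) (i0 : I) (h : I -> X).
Hypothesis h_inj : injective h.

Definition lift_perm (p : I -> I) (x : X) : X :=
  if `[< exists i, h i = x >] then h (p (xget i0 [set i | h i = x])) else x.

Lemma lift_perm_img p i : lift_perm p (h i) = h (p i).
Proof.
rewrite /lift_perm asboolT; last by exists i.
by rewrite (@xget_unique _ _ _ i) // => j /h_inj.
Qed.

Lemma lift_perm_out p x : ~ (exists i, h i = x) -> lift_perm p x = x.
Proof. by move=> hx; rewrite /lift_perm asboolF. Qed.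

Lemma lift_permK p q : cancel p q -> cancel (lift_perm p) (lift_perm q).
Proof.
move=> pK x; have [[i <-]|hx] := pselect (exists i, h i = x).
  by rewrite !lift_perm_img pK.
by rewrite !lift_perm_out.
Qed.

Lemma lift_perm_bij p q : cancel p q -> cancel q p -> bijective (lift_perm p).
Proof. by move=> pK qK; exists (lift_perm q); apply: lift_permK. Qed.

Lemma preimage_lift_perm p S : lift_perm p @^-1` (h @` S) = h @` (p @^-1` S).
Proof.
rewrite predeqE => x; have [[i <-]|hx] := pselect (exists i, h i = x).
  change ((h @` S) (lift_perm p (h i)) <-> (h @` (p @^-1` S)) (h i)).
  by rewrite lift_perm_img !image_inj.
change ((h @` S) (lift_perm p x) <-> (h @` (p @^-1` S)) x).
by rewrite lift_perm_out //; split=> -[i _ hix]; case: hx; exists i.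
Qed.

End LiftPerm.

Lemma image_proper (T U : Type) (h : T -> U) (S S' : set T) :
  injective h -> S `<` S' -> h @` S `<` h @` S'.
Proof.
move=> h_inj [SS' nS'S]; split; first exact: image_subset.
move=> hS'S; apply: nS'S => x S'x.
by have := hS'S (h x) (imageP h S'x); rewrite image_inj.
Qed.

Definition sum_swap (i : nat + nat) : nat + nat :=
  match i with inl n => inr n | inr n => inl n end.

(* Hilbert's hotel on two copies of [nat]: the left copy moves down by one, its
   bottom element moving to the bottom of the right copy, which moves up. *)
Definition sum_shift (i : nat + nat) : nat + nat :=
  match i with inl 0 => inr 0 | inl n.+1 => inl n | inr n => inr n.+1 end.

Definition sum_unshift (i : nat + nat) : nat + nat :=
  match i with inl n => inl n.+1 | inr 0 => inl 0 | inr n.+1 => inr n end.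

Lemma sum_swapK : involutive sum_swap. Proof. by case. Qed.
Lemma sum_shiftK : cancel sum_shift sum_unshift. Proof. by case=> [[]|]. Qed.
Lemma sum_unshiftK : cancel sum_unshift sum_shift. Proof. by case=> [|[]]. Qed.

Lemma preimage_sum_swap_inl : sum_swap @^-1` range inl = range inr.
Proof. by rewrite predeqE => -[] n; split=> -[m _ //= [<-]]; exists m. Qed.

Lemma preimage_sum_swap_inr : sum_swap @^-1` range inr = range inl.
Proof. by rewrite predeqE => -[] n; split=> -[m _ //= [<-]]; exists m. Qed.

Lemma preimage_sum_shift_inl :
  sum_shift @^-1` range inl `<` range (@inl nat nat).
Proof.
split; first by case=> [[|n]|n] [m _] //; exists n.+1.
by move=> /(_ (inl 0)) /=; case=> [|m _ //]; exists 0%N.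
Qed.

Lemma preimage_sum_shift_inr :
  range inr `<` sum_shift @^-1` range (@inr nat nat).
Proof.
split; first by case=> n [m _ //= [<-]]; exists m.+1.
by move=> /(_ (inl 0)) /=; case=> [|m _ //]; exists 0%N.
Qed.

Section SwapShift.
Variables (X : Type) (f g : nat -> X).
Hypotheses (f_inj : injective f) (g_inj : injective g).
Hypothesis fg_disj : range f `&` range g = set0.

Let h (i : nat + nat) : X := match i with inl n => f n | inr n => g n end.

Let h_inj : injective h.
Proof.
have fg_neq m n : f m <> g n.
  move=> fg; suff : (range f `&` range g) (f m) by rewrite fg_disj.
  by split; [exists m|exists n].
by case=> m [] n //= => [/f_inj|/fg_neq|/esym/fg_neq|/g_inj] // ->.
Qed.

Let range_f : range f = h @` range inl. Proof. by rewrite image_comp. Qed.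
Let range_g : range g = h @` range inr. Proof. by rewrite image_comp. Qed.

Lemma swap_perm_exists : exists2 tau : X -> X, bijective tau &
  tau @^-1` range f = range g /\ tau @^-1` range g = range f.
Proof.
exists (lift_perm (inl 0) h sum_swap).
  exact: lift_perm_bij sum_swapK sum_swapK.
rewrite range_f range_g !preimage_lift_perm //.
by rewrite preimage_sum_swap_inl preimage_sum_swap_inr.
Qed.

Lemma shift_perm_exists : exists2 sig : X -> X, bijective sig &
  sig @^-1` range f `<` range f /\ range g `<` sig @^-1` range g.
Proof.
exists (lift_perm (inl 0) h sum_shift).
  exact: lift_perm_bij sum_shiftK sum_unshiftK.
rewrite range_f range_g !preimage_lift_perm //.
by split; apply: image_proper => //;
  [exact: preimage_sum_shift_inl|exact: preimage_sum_shift_inr].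
Qed.

End SwapShift.

Lemma properC (T : Type) (A C : set T) : A `<` C -> ~` C `<` ~` A.
Proof.
by case=> AC nCA; split=> [|/subsetC]; [exact: subsetC|rewrite !setCK].
Qed.

Section WorldOn.
Variables (R : realType) (X : Type).
Implicit Types (A C : set X) (k l : R).

Lemma permute_world_on (pi : X -> X) A k l :
  permute pi (world_on A k l) = world_on (pi @^-1` A) k l.
Proof. by []. Qed.

Lemma world_on_setC A k l : world_on A k l = world_on (~` A) l k.
Proof.
apply/funext => x; rewrite /world_on.
have [Ax|nAx] := pselect (A x); first by rewrite asboolT // asboolF.
by rewrite asboolF // asboolT.
Qed.

End WorldOn.

Section Preferences.
Variables (R : realType) (X : Type) (W : set (X -> R)).
Variable ge : (X -> R) -> (X -> R) -> Prop.
Hypotheses (ge_pre : preorder_on W ge) (ge_pareto : strong_pareto W ge).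
Hypothesis ge_perm : permutation_invariance W ge.
Hypothesis W_perm : perm_closed W.

Lemma world_on_pareto_lt (A C : set X) (k l : R) : l < k -> A `<` C ->
  W (world_on A k l) -> W (world_on C k l) ->
  strictly ge (world_on C k l) (world_on A k l).
Proof.
move=> lk [AC /existsNP[x /not_implyP[Cx nAx]]] WA WC.
apply: ge_pareto => // [y|].
  rewrite /world_on; have [Ay|nAy] := pselect (A y).
    by rewrite (asboolT Ay) (asboolT (AC _ Ay)).
  by rewrite (asboolF nAy); case: ifP => _; [exact: ltW|exact: lexx].
by exists x; rewrite /world_on (asboolF nAx) (asboolT Cx).
Qed.

Lemma world_on_pareto_gt (A C : set X) (k l : R) : k < l -> A `<` C ->
  W (world_on A k l) -> W (world_on C k l) ->
  strictly ge (world_on A k l) (world_on C k l).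
Proof.
rewrite ![world_on _ k l]world_on_setC => kl /properC CA WA WC.
exact: world_on_pareto_lt kl CA WC WA.
Qed.

(* If [w] and [v] were indifferent, [permute sig] would preserve this, giving
   [sig w >= sig v >= v >= w], against [w > sig w]. *)
Lemma not_indifferent_of_shift (w v : X -> R) (sig : X -> X) :
  W w -> W v -> bijective sig ->
  strictly ge w (permute sig w) -> ge (permute sig v) v ->
  ge w v -> ge v w -> False.
Proof.
move=> Ww Wv sig_bij [_ sigw_ge_w] sigv_ge_v wv vw; apply: sigw_ge_w.
have [_ ge_trans] := ge_pre.
have Wsw := W_perm Ww sig_bij; have Wsv := W_perm Wv sig_bij.
apply: (ge_trans _ _ _ Wsw Wsv Ww); first exact/(ge_perm Ww Wv sig_bij).
exact: ge_trans sigv_ge_v vw.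
Qed.

Lemma incomparable_of_swap_shift (w v : X -> R) (tau sig : X -> X) :
  W w -> W v -> bijective tau -> permute tau w = v -> permute tau v = w ->
  bijective sig -> strictly ge w (permute sig w) -> ge (permute sig v) v ->
  ~ ge w v /\ ~ ge v w.
Proof.
move=> Ww Wv tau_bij tau_wv tau_vw sig_bij sig_w sig_v.
have ge_swap a b : W a -> W b -> permute tau a = b -> permute tau b = a ->
    ge a b -> ge b a.
  by move=> Wa Wb tau_ab tau_ba /(ge_perm Wa Wb tau_bij); rewrite tau_ab tau_ba.
split=> [wv|vw]; apply: (not_indifferent_of_shift Ww Wv sig_bij sig_w sig_v) => //.
- exact: ge_swap wv.
- exact: ge_swap vw.
Qed.

End Preferences.

Theorem mainTheorem5 (R : realType) (X : Type) (W : set (X -> R))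
  (ge : (X -> R) -> (X -> R) -> Prop) (A B : set X) (k l : R) :
  [set: X] #= [set: nat] ->
  perm_closed W ->
  preorder_on W ge ->
  strong_pareto W ge ->
  permutation_invariance W ge ->
  infinite_set A -> infinite_set B -> A `&` B = set0 ->
  k != l ->
  W (world_on A k l) -> W (world_on B k l) ->
  ~ ge (world_on A k l) (world_on B k l) /\ ~ ge (world_on B k l) (world_on A k l).
Proof.
move=> X_nat W_perm ge_pre ge_pareto ge_perm A_inf B_inf AB kl WA WB.
have countable_sub (S : set X) : countable S.
  move: X_nat; rewrite card_eq_le => /andP[X_cnt _].
  exact: sub_countable (subset_card_le (@subsetT _ S)) X_cnt.
have [f [f_inj fA]] := countably_infinite_enum (countable_sub A) A_inf; subst A.
have [g [g_inj gB]] := countably_infinite_enum (countable_sub B) B_inf; subst B.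
have [tau tau_bij [tau_f tau_g]] := swap_perm_exists f_inj g_inj AB.
have [sig sig_bij [sig_f sig_g]] := shift_perm_exists f_inj g_inj AB.
have tau_fg : permute tau (world_on (range f) k l) = world_on (range g) k l.
  by rewrite permute_world_on tau_f.
have tau_gf : permute tau (world_on (range g) k l) = world_on (range f) k l.
  by rewrite permute_world_on tau_g.
have WsA : W (world_on (sig @^-1` range f) k l) := W_perm _ _ WA sig_bij.
have WsB : W (world_on (sig @^-1` range g) k l) := W_perm _ _ WB sig_bij.
have [lk|kl'|eqkl] := ltgtP l k; last by rewrite eqkl eqxx in kl.
- apply: (incomparable_of_swap_shift ge_pre ge_perm W_perm
    WA WB tau_bij tau_fg tau_gf sig_bij); rewrite permute_world_on.
    exact (world_on_pareto_lt ge_pareto lk sig_f WsA WA).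
  exact (world_on_pareto_lt ge_pareto lk sig_g WB WsB).1.
- have [] // := incomparable_of_swap_shift ge_pre ge_perm W_perm
    WB WA tau_bij tau_gf tau_fg sig_bij; rewrite permute_world_on.
    exact (world_on_pareto_gt ge_pareto kl' sig_g WB WsB).
  exact (world_on_pareto_gt ge_pareto kl' sig_f WsA WA).1.
Qed.
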